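(* For any nonempty valid set $T$, there exist a finite set $R_T$ and a number $n_T$ such that $\mathcal{S}_T(n)\subseteq R_T$ for all $n\ge n_T$.
   Context: For relatively prime positive integers $\alpha,\beta$ and positive integers $a_1,a_2$, the $(\alpha,\beta)$-walk $w^{\alpha,\beta}_k(a_1,a_2)$ is given by $w_1=a_1$, $w_2=a_2$, $w_{k+2}=\alpha w_{k+1}+\beta w_k$ ($k\ge1$). For a positive integer $n$, $s^{\alpha,\beta}(n;a_1,a_2)$ is the (largest) index $s$ with $w^{\alpha,\beta}_s(a_1,a_2)=n$ ($-\infty$ if none), and $s^{\alpha,\beta}(n)=\max_{a_1,a_2\ge1}s^{\alpha,\beta}(n;a_1,a_2)$. A set $T$ is valid if $T\subseteq\{(\alpha,\beta):\alpha,\beta\ge1,\gcd(\alpha,\beta)=1\}$. For valid $T$ define $\bar s_T(n)=\max_{(\alpha,\beta)\in T}s^{\alpha,\beta}(n)$ and $\mathcal{S}_T(n)=\{(\alpha,\beta)\in T:s^{\alpha,\beta}(n)=\bar s_T(n)\}$. *)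

From mathcomp Require Import all_boot.
Set Implicit Arguments. Unset Strict Implicit. Unset Printing Implicit Defensive.

(* The (alpha,beta)-walk, indexed from 1:  walk_{al,be} a1 a2 1 = a1,
   walk 2 = a2, walk (k+2) = al * walk (k+1) + be * walk k.
   We compute consecutive pairs (w_k, w_{k+1}); index 0 is a dummy. *)
Fixpoint walk_pair (al be a1 a2 : nat) (k : nat) : nat * nat :=
  match k with
  | 0 => (a1, a2)            (* pair for index 1 *)
  | k'.+1 => let p := walk_pair al be a1 a2 k' in (p.2, al * p.2 + be * p.1)
  end.

(* w^{al,be}_k(a1,a2) for k >= 1 (value at k = 0 is irrelevant). *)
Definition walk (al be a1 a2 k : nat) : nat := (walk_pair al be a1 a2 k.-1).1.

Definition is_max (P : nat -> Prop) (m : nat) : Prop :=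
  P m /\ forall k, P k -> k <= m.

Definition valid (T : nat * nat -> Prop) : Prop :=
  forall p, T p -> 0 < p.1 /\ 0 < p.2 /\ coprime p.1 p.2.

(* indices s >= 1 with w^{al,be}_s(a1,a2) = n for some a1, a2 >= 1;
   s^{al,be}(n) = max_{a1,a2} s^{al,be}(n;a1,a2) is the maximum of this set
   (equivalently, the max over a1,a2 of the largest such index). *)
Definition hit_index (al be n s : nat) : Prop :=
  exists a1 a2, 0 < a1 /\ 0 < a2 /\ 0 < s /\ walk al be a1 a2 s = n.

Definition s_ab (al be n m : nat) : Prop := is_max (hit_index al be n) m.

Definition sbar (T : nat * nat -> Prop) (n m : nat) : Prop :=
  is_max (fun v => exists p, T p /\ s_ab p.1 p.2 n v) m.

Definition S_T (T : nat * nat -> Prop) (n : nat) (p : nat * nat) : Prop :=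
  T p /\ exists m, s_ab p.1 p.2 n m /\ sbar T n m.

From mathcomp Require Import all_boot zify.
From Stdlib Require Import Classical.

Set Implicit Arguments.
Unset Strict Implicit.
Unset Printing Implicit Defensive.

(* Pick (a0, b0) in T and put c := a0 + b0.  The walk is
   w_{k+2} = be U_k a1 + U_{k+1} a2, where U is the Lucas sequence of
   (al, be), which grows at least like (al + be)^(k/2).  Hence a pair with
   al + be >= c^8 only reaches n at indices s <= 2j + 3, where
   (al + be)^j <= n, so c^(8j) <= n.  On the other hand be U_k and U_{k+1}
   are coprime, so every n > be U_k U_{k+1} is a positive combination of
   them: (a0, b0) reaches n at index 2j + 4 as soon as c^(4j+6) < n, which
   holds for n >= c^12.  Thus for large n every maximiser in S_T(n) has both
   coordinates below c^8. *)

Fixpoint lucasU (al be k : nat) : nat :=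
  match k with
  | 0 => 0
  | 1 => 1
  | (k'.+1 as k1).+1 => al * lucasU al be k1 + be * lucasU al be k'
  end.

Section Lucas.

Variables al be : nat.
Local Notation U := (lucasU al be).

Lemma lucasUSS k : U k.+2 = al * U k.+1 + be * U k.
Proof. by []. Qed.

Lemma walk_pairS a1 a2 k : walk_pair al be a1 a2 k.+1 =
  ((walk_pair al be a1 a2 k).2,
   al * (walk_pair al be a1 a2 k).2 + be * (walk_pair al be a1 a2 k).1).
Proof. by []. Qed.

Lemma walk_pair_lucas a1 a2 k : walk_pair al be a1 a2 k.+1 =
  (be * U k * a1 + U k.+1 * a2, be * U k.+1 * a1 + U k.+2 * a2).
Proof.
elim: k => [|k IH]; first by rewrite /=; congr pair; lia.
rewrite walk_pairS IH (lucasUSS k.+1) lucasUSS; cbn [fst snd].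
by congr pair; nia.
Qed.

Lemma walk_lucas a1 a2 k : walk al be a1 a2 k.+2 = be * U k * a1 + U k.+1 * a2.
Proof. by rewrite /walk walk_pair_lucas. Qed.

Lemma coprime_lucasU k : coprime al be -> coprime (be * U k) (U k.+1).
Proof.
move=> co_ab; elim: k => [|k IH]; first by rewrite muln0.
rewrite lucasUSS coprimeMl; apply/andP; split.
  rewrite addnC mulnC /coprime gcdnMDl -/(coprime _ _) coprimeMr coprime_sym co_ab.
  by move: IH; rewrite coprimeMl => /andP [].
by rewrite /coprime gcdnMDl -/(coprime _ _) coprime_sym.
Qed.

Hypothesis al_gt0 : 0 < al.

Lemma lucasU_le_expn k : U k <= (al + be) ^ k.
Proof.
elim/ltn_ind: k => -[|[|k]] IH //; first by rewrite expn1 /=; lia.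
have := IH k.+1 (ltnSn _); have := IH k (ltnW (ltnSn _)).
have : (al + be) ^ k <= (al + be) ^ k.+1 by rewrite leq_pexp2l //; lia.
rewrite lucasUSS !expnS; nia.
Qed.

Lemma lucasU_leSn k : U k <= U k.+1.
Proof. by case: k => [|k] //; rewrite lucasUSS; nia. Qed.

Lemma lucasU_monotone : {homo U : i j / i <= j}.
Proof. exact: homo_leq leq_trans lucasU_leSn. Qed.

Lemma lucasU_SS_ge k : (al + be) * U k <= U k.+2.
Proof. by rewrite lucasUSS; have := lucasU_leSn k; nia. Qed.

Lemma expn_le_lucasU_odd j : (al + be) ^ j <= U j.*2.+1.
Proof.
elim: j => [|j IH] //; rewrite expnS doubleS.
by apply: leq_trans (lucasU_SS_ge _); rewrite leq_mul2l IH orbT.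
Qed.

End Lucas.

Lemma coprime_pos_repr A B n : 0 < A -> 0 < B -> coprime A B -> A * B < n ->
  exists a1 a2, [/\ 0 < a1, 0 < a2 & A * a1 + B * a2 = n].
Proof.
move=> A_gt0 B_gt0 co_AB ltABn.
have [u uA] : exists u, u * A = 1 %[mod B].
  have [u v uAE _] := egcdnP B A_gt0.
  by exists u; rewrite uAE (eqP co_AB) modnMDl.
(* The residue of u * n modulo B, represented in [1, B] instead of [0, B). *)
set x := ((u * n + B.-1) %% B).+1.
have x_gt0 : 0 < x by [].
have x_leB : x <= B by rewrite ltn_pmod.
have xE : x = u * n %[mod B].
  by rewrite /x -addn1 modnDml -addnA addn1 prednK // modnDr.
have AxE : A * x = n %[mod B].
  by rewrite -modnMmr xE modnMmr mulnA (mulnC A) -modnMml uA modnMml mul1n.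
have ltAxn : A * x < n by apply: leq_ltn_trans ltABn; rewrite leq_mul2l x_leB orbT.
have B_dvd : B %| n - A * x by rewrite -eqn_mod_dvd ?(ltnW ltAxn) // AxE.
exists x, ((n - A * x) %/ B); split => //.
  by rewrite divn_gt0 // dvdn_leq // subn_gt0.
by rewrite [B * _]mulnC divnK // subnKC // ltnW.
Qed.

Lemma bounded_is_max (P : nat -> Prop) B :
  (exists k, P k) -> (forall s, P s -> s <= B) -> exists m, is_max P m.
Proof.
elim: B => [|B IH] [k Pk] P_le.
  have k0 : k = 0 by apply/eqP; rewrite -leqn0 P_le.
  by exists 0; split=> [|s /P_le]; rewrite -?k0.
case: (classic (P B.+1)) => [PB|nPB]; first by exists B.+1.
apply: IH; first by exists k.
move=> s Ps; move: (P_le s Ps); rewrite leq_eqVlt => /predU1P [sB|//].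
by rewrite sB in Ps.
Qed.

Lemma hit_index_bound al be n s : 0 < al -> hit_index al be n s ->
  exists j, s <= j.*2 + 3 /\ (al + be) ^ j <= n.
Proof.
move=> al_gt0 [a1 [a2 [a1_gt0 [a2_gt0 [s_gt0 <-]]]]].
case: s s_gt0 => [|[|t]] // _; first by exists 0.
exists t./2; split; first by have := odd_double_half t; case: odd => /=; lia.
rewrite walk_lucas.
have U_le : lucasU al be (t./2).*2.+1 <= lucasU al be t.+1.
  by apply: lucasU_monotone => //; have := odd_double_half t; case: odd => /=; lia.
have := expn_le_lucasU_odd be al_gt0 t./2; nia.
Qed.

Lemma hit_index_large al be n k : 0 < al -> 0 < be -> coprime al be ->
  (al + be) ^ (k.*2 + 4) < n -> hit_index al be n k.+3.
Proof.
move=> al_gt0 be_gt0 co_ab n_large.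
have U_gt0 : 0 < lucasU al be k.+1 by apply: (lucasU_monotone be al_gt0 (isT : 1 <= k.+1)).
have U_le := lucasU_le_expn be al_gt0.
have A_gt0 : 0 < be * lucasU al be k.+1 by rewrite muln_gt0 be_gt0.
have B_gt0 : 0 < lucasU al be k.+2 := leq_trans U_gt0 (lucasU_leSn be al_gt0 _).
have AB_lt_n : be * lucasU al be k.+1 * lucasU al be k.+2 < n.
  apply: leq_ltn_trans n_large.
  have -> : k.*2 + 4 = k.+2 + k.+2 by lia.
  by rewrite expnD leq_mul ?U_le // [_ ^ k.+2]expnS leq_mul ?U_le ?leq_addl.
have [a1 [a2 [a1_gt0 a2_gt0 E]]] :=
  coprime_pos_repr A_gt0 B_gt0 (coprime_lucasU k.+1 co_ab) AB_lt_n.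
by exists a1, a2; rewrite walk_lucas.
Qed.

Lemma s_ab_exists al be n s : 0 < al -> 0 < be -> hit_index al be n s ->
  exists m, s_ab al be n m.
Proof.
move=> al_gt0 be_gt0 hit_s; apply: (@bounded_is_max _ (n.*2 + 3)); first by exists s.
move=> t /(hit_index_bound al_gt0) [j [t_le n_ge]].
have : j < (al + be) ^ j by apply: ltn_expl; lia.
lia.
Qed.

Theorem theorem5p1 (T : nat * nat -> Prop) :
  valid T -> (exists p, T p) ->
  exists (R : seq (nat * nat)) (nT : nat),
    forall n, 0 < n -> nT <= n ->
      forall p, S_T T n p -> p \in R.
Proof.
move=> validT [[a0 b0] T_ab0]; have [/= a0_gt0 [/= b0_gt0 co_ab0]] := validT _ T_ab0.
set c := a0 + b0; have c_gt1 : 1 < c by lia.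
exists [seq (x, y) | x <- iota 0 (c ^ 8), y <- iota 0 (c ^ 8)], (c ^ 12).
move=> n _ n_ge [al be] [T_ab [m [s_m sbar_m]]].
have [/= al_gt0 [/= be_gt0 _]] := validT _ T_ab.
have [small|large] := ltnP (al + be) (c ^ 8).
  by apply: allpairs_f; rewrite mem_iota; lia.
have [j [m_le n_ge_j]] := hit_index_bound al_gt0 s_m.1.
have n_large : c ^ (j.*2.+1.*2 + 4) < n.
  have [j_le1|j_gt1] := leqP j 1.
    by apply: leq_trans n_ge; rewrite ltn_exp2l //; lia.
  apply: leq_trans n_ge_j; apply: (@leq_trans ((c ^ 8) ^ j)).
    by rewrite -expnM ltn_exp2l //; lia.
  by rewrite leq_exp2r //; lia.
have hit_ab0 := hit_index_large a0_gt0 b0_gt0 co_ab0 n_large.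
have [v s_v] := s_ab_exists a0_gt0 b0_gt0 hit_ab0.
have v_le_m : v <= m by apply: sbar_m.2; exists (a0, b0).
have := s_v.2 _ hit_ab0; lia.
Qed.
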